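(* For every epimorphism $E$ in $\mathbf{Lens}$, the get functor $UE$ is an effective epimorphism in $\mathbf{Cat}$ (i.e. $UE$ is a coequaliser of its kernel pair in $\mathbf{Cat}$).
   Context: $\mathbf{Cat}$ is the category of small categories and functors. A lens $F\colon \mathbf{A}\to\mathbf{B}$ between small categories consists of a functor $F\colon\mathbf{A}\to\mathbf{B}$ (the get functor) together with, for each object $A$ of $\mathbf{A}$, a function $\varphi_{F,A}$ from the set of morphisms of $\mathbf{B}$ with domain $FA$ to the set of morphisms of $\mathbf{A}$ with domain $A$, such that: $F(\varphi_{F,A}b)=b$; $\varphi_{F,A}(\mathrm{id}_{FA})=\mathrm{id}_A$; and $\varphi_{F,A}(b'\circ b)=\varphi_{F,A'}(b')\circ\varphi_{F,A}(b)$ whenever $b$ has domain $FA$, $A'$ is the codomain of $\varphi_{F,A}b$, and $b'$ has domain $FA'$. $\mathbf{Lens}$ is the category of small categories and lenses, with composite of $F\colon\mathbf{A}\to\mathbf{B}$, $G\colon\mathbf{B}\to\mathbf{C}$ having get functor $G\circ F$ and puts $\varphi_{G\circ F,A}(c)=\varphi_{F,A}(\varphi_{G,FA}(c))$. $U\colon\mathbf{Lens}\to\mathbf{Cat}$ sends a lens to its get functor. *)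

(* Small categories presented "single-sorted": a type of objects,
   a type of morphisms, domain/codomain maps, identities and a (total) composition
   operation whose laws are only required on composable pairs. *)
From Stdlib Require Import ProofIrrelevance ClassicalEpsilon.

Record Category := {
  Ob : Type;
  Mor : Type;
  dom : Mor -> Ob;
  cod : Mor -> Ob;
  idm : Ob -> Mor;
  comp : Mor -> Mor -> Mor;  (* comp g f = g \circ f, meaningful when dom g = cod f *)
  dom_id : forall a, dom (idm a) = a;
  cod_id : forall a, cod (idm a) = a;
  dom_comp : forall g f, dom g = cod f -> dom (comp g f) = dom f;
  cod_comp : forall g f, dom g = cod f -> cod (comp g f) = cod g;
  comp_id_l : forall f, comp (idm (cod f)) f = f;
  comp_id_r : forall f, comp f (idm (dom f)) = f;
  comp_assoc : forall h g f, dom h = cod g -> dom g = cod f ->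
      comp h (comp g f) = comp (comp h g) f
}.
Arguments dom {c} _.
Arguments cod {c} _.
Arguments idm {c} _.
Arguments comp {c} _ _.

Record Functor (A B : Category) := {
  fob : Ob A -> Ob B;
  fmor : Mor A -> Mor B;
  f_dom : forall f, dom (fmor f) = fob (dom f);
  f_cod : forall f, cod (fmor f) = fob (cod f);
  f_id : forall a, fmor (idm a) = idm (fob a);
  f_comp : forall g f, dom g = cod f -> fmor (comp g f) = comp (fmor g) (fmor f)
}.
Arguments fob {A B} _ _.
Arguments fmor {A B} _ _.

Definition functor_eq {A B : Category} (F G : Functor A B) : Prop :=
  (forall a, fob F a = fob G a) /\ (forall f, fmor F f = fmor G f).

(* fcomp F G is the composite  G \circ F : A -> C. *)
Definition fcomp {A B C : Category} (F : Functor A B) (G : Functor B C) : Functor A C.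
Proof.
  refine {| fob := fun a => fob G (fob F a); fmor := fun f => fmor G (fmor F f) |}.
  - intro f. now rewrite f_dom, f_dom.
  - intro f. now rewrite f_cod, f_cod.
  - intro a. now rewrite f_id, f_id.
  - intros g f H. rewrite f_comp by exact H. apply f_comp.
    now rewrite f_dom, f_cod, H.
Defined.

(* Lenses (delta lenses): get functor + put functions phi_{F,a} on morphisms
   of B with domain F a, landing in morphisms of A with domain a. *)
Record Lens (A B : Category) := {
  get : Functor A B;
  put : Ob A -> Mor B -> Mor A;
  put_dom : forall a b, dom b = fob get a -> dom (put a b) = a;
  put_get : forall a b, dom b = fob get a -> fmor get (put a b) = b;
  put_id : forall a, put a (idm (fob get a)) = idm a;
  put_comp : forall a b b', dom b = fob get a ->
      dom b' = fob get (cod (put a b)) ->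
      put a (comp b' b) = comp (put (cod (put a b)) b') (put a b)
}.
Arguments get {A B} _.
Arguments put {A B} _ _ _.

(* Composite lens  G \circ F  (F : A -> B, G : B -> C). *)
Definition lcomp {A B C : Category} (F : Lens A B) (G : Lens B C) : Lens A C.
Proof.
  refine {| get := fcomp (get F) (get G);
            put := fun a c => put F a (put G (fob (get F) a) c) |}.
  - intros a c H. apply put_dom. apply put_dom. exact H.
  - intros a c H. simpl. rewrite put_get. apply put_get. exact H.
    apply put_dom. exact H.
  - intro a. simpl. rewrite put_id. apply put_id.
  - intros a c c' H H'. simpl in *.
    set (x := put G (fob (get F) a) c) in *.
    assert (Hx : dom x = fob (get F) a) by (apply put_dom; exact H).
    set (y := put F a x) in *.
    assert (Hcy : fob (get F) (cod y) = cod x).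
    { rewrite <- f_cod. unfold y. rewrite put_get by exact Hx. reflexivity. }
    rewrite Hcy in H'.
    rewrite (put_comp _ _ G (fob (get F) a) c c' H H').
    fold x.
    assert (Hz : dom (put G (cod x) c') = fob (get F) (cod y)).
    { rewrite put_dom by exact H'. now rewrite Hcy. }
    rewrite (put_comp _ _ F a x _ Hx Hz). fold y. now rewrite Hcy.
Defined.

Definition lens_eq {A B : Category} (F G : Lens A B) : Prop :=
  functor_eq (get F) (get G) /\
  (forall a b, dom b = fob (get F) a -> put F a b = put G a b).

Definition lens_epi {A B : Category} (E : Lens A B) : Prop :=
  forall (C : Category) (G H : Lens B C),
    lens_eq (lcomp E G) (lcomp E H) -> lens_eq G H.

Definition is_coequalizer {P A B : Category} (p q : Functor P A) (F : Functor A B) : Prop :=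
  functor_eq (fcomp p F) (fcomp q F) /\
  forall (D : Category) (K : Functor A D),
    functor_eq (fcomp p K) (fcomp q K) ->
    exists K' : Functor B D,
      functor_eq (fcomp F K') K /\
      forall K'' : Functor B D, functor_eq (fcomp F K'') K -> functor_eq K'' K'.

(* The kernel pair of F : A -> B in Cat: the (standard) pullback of F along F,
   with objects / morphisms the pairs identified by F. *)
Section KernelPair.
Variables (A B : Category) (F : Functor A B).

Definition kpOb := { p : Ob A * Ob A | fob F (fst p) = fob F (snd p) }.
Definition kpMor := { m : Mor A * Mor A | fmor F (fst m) = fmor F (snd m) }.

Definition kp_dom (m : kpMor) : kpOb.
Proof.
  refine (exist _ (dom (fst (proj1_sig m)), dom (snd (proj1_sig m))) _).
  simpl. rewrite <- !f_dom. f_equal. exact (proj2_sig m).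
Defined.

Definition kp_cod (m : kpMor) : kpOb.
Proof.
  refine (exist _ (cod (fst (proj1_sig m)), cod (snd (proj1_sig m))) _).
  simpl. rewrite <- !f_cod. f_equal. exact (proj2_sig m).
Defined.

Definition kp_id (o : kpOb) : kpMor.
Proof.
  refine (exist _ (idm (fst (proj1_sig o)), idm (snd (proj1_sig o))) _).
  simpl. rewrite !f_id. f_equal. exact (proj2_sig o).
Defined.

Lemma kp_dc1 (g f : kpMor) : kp_dom g = kp_cod f ->
  dom (fst (proj1_sig g)) = cod (fst (proj1_sig f)).
Proof. intro H. exact (f_equal (fun o => fst (proj1_sig o)) H). Qed.

Lemma kp_dc2 (g f : kpMor) : kp_dom g = kp_cod f ->
  dom (snd (proj1_sig g)) = cod (snd (proj1_sig f)).
Proof. intro H. exact (f_equal (fun o => snd (proj1_sig o)) H). Qed.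

Definition kp_comp_c (g f : kpMor) (H : kp_dom g = kp_cod f) : kpMor.
Proof.
  refine (exist _ (comp (fst (proj1_sig g)) (fst (proj1_sig f)),
                   comp (snd (proj1_sig g)) (snd (proj1_sig f))) _).
  simpl. rewrite (f_comp _ _ F _ _ (kp_dc1 _ _ H)), (f_comp _ _ F _ _ (kp_dc2 _ _ H)).
  f_equal; [exact (proj2_sig g) | exact (proj2_sig f)].
Defined.

(* composition; on non-composable pairs it returns an arbitrary value *)
Definition kp_comp (g f : kpMor) : kpMor :=
  match excluded_middle_informative (kp_dom g = kp_cod f) with
  | left H => kp_comp_c _ _ H
  | right _ => g
  end.

Lemma kp_comp_E (g f : kpMor) (H : kp_dom g = kp_cod f) :
  proj1_sig (kp_comp g f) =
  (comp (fst (proj1_sig g)) (fst (proj1_sig f)),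
   comp (snd (proj1_sig g)) (snd (proj1_sig f))).
Proof.
  unfold kp_comp. destruct excluded_middle_informative as [H'|H']; [reflexivity|].
  contradiction.
Qed.

Lemma kpOb_eq (o o' : kpOb) : proj1_sig o = proj1_sig o' -> o = o'.
Proof. destruct o, o'; simpl; intro; now apply subset_eq_compat. Qed.

Lemma kpMor_eq (m m' : kpMor) : proj1_sig m = proj1_sig m' -> m = m'.
Proof. destruct m, m'; simpl; intro; now apply subset_eq_compat. Qed.

Lemma kp_comp_ok (g f : kpMor) : kp_dom g = kp_cod f ->
  dom (fst (proj1_sig g)) = cod (fst (proj1_sig f)) /\
  dom (snd (proj1_sig g)) = cod (snd (proj1_sig f)).
Proof. intro H; split; [exact (kp_dc1 _ _ H) | exact (kp_dc2 _ _ H)]. Qed.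

Definition KP : Category.
Proof.
  refine {| Ob := kpOb; Mor := kpMor; dom := kp_dom; cod := kp_cod;
            idm := kp_id; comp := kp_comp |}.
  - intro a. apply kpOb_eq. destruct a as [[a1 a2] ?]. simpl. now rewrite !dom_id.
  - intro a. apply kpOb_eq. destruct a as [[a1 a2] ?]. simpl. now rewrite !cod_id.
  - intros g f H. apply kpOb_eq. simpl. rewrite (kp_comp_E _ _ H).
    destruct (kp_comp_ok _ _ H). simpl. now rewrite !dom_comp.
  - intros g f H. apply kpOb_eq. simpl. rewrite (kp_comp_E _ _ H).
    destruct (kp_comp_ok _ _ H). simpl. now rewrite !cod_comp.
  - intro f. apply kpMor_eq. assert (H : kp_dom (kp_id (kp_cod f)) = kp_cod f).
    { apply kpOb_eq. simpl. now rewrite !dom_id. }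
    rewrite (kp_comp_E _ _ H). destruct f as [[f1 f2] ?]. simpl. now rewrite !comp_id_l.
  - intro f. apply kpMor_eq. assert (H : kp_dom f = kp_cod (kp_id (kp_dom f))).
    { apply kpOb_eq. simpl. now rewrite !cod_id. }
    rewrite (kp_comp_E _ _ H). destruct f as [[f1 f2] ?]. simpl. now rewrite !comp_id_r.
  - intros h g f H1 H2. apply kpMor_eq.
    destruct (kp_comp_ok _ _ H1) as [a1 a2]. destruct (kp_comp_ok _ _ H2) as [b1 b2].
    assert (H3 : kp_dom h = kp_cod (kp_comp g f)).
    { apply kpOb_eq. simpl. rewrite (kp_comp_E _ _ H2). simpl. rewrite !cod_comp by assumption; congruence. }
    assert (H4 : kp_dom (kp_comp h g) = kp_cod f).
    { apply kpOb_eq. simpl. rewrite (kp_comp_E _ _ H1). simpl. rewrite !dom_comp by assumption; congruence. }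
    rewrite (kp_comp_E _ _ H3), (kp_comp_E _ _ H4), (kp_comp_E _ _ H1), (kp_comp_E _ _ H2). simpl.
    now rewrite !comp_assoc.
Defined.

Definition kp_proj1 : Functor KP A.
Proof.
  refine (@Build_Functor KP A (fun o : kpOb => fst (proj1_sig o))
                                (fun m : kpMor => fst (proj1_sig m)) _ _ _ _).
  - reflexivity.
  - reflexivity.
  - reflexivity.
  - intros g f H. simpl. now rewrite (kp_comp_E _ _ H).
Defined.

Definition kp_proj2 : Functor KP A.
Proof.
  refine (@Build_Functor KP A (fun o : kpOb => snd (proj1_sig o))
                                (fun m : kpMor => snd (proj1_sig m)) _ _ _ _).
  - reflexivity.
  - reflexivity.
  - reflexivity.
  - intros g f H. simpl. now rewrite (kp_comp_E _ _ H).
Defined.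

End KernelPair.

Definition effective_epi {A B : Category} (F : Functor A B) : Prop :=
  is_coequalizer (kp_proj1 _ _ F) (kp_proj2 _ _ F) F.

From Stdlib Require Import ClassicalEpsilon.

(* A lens epimorphism E : A -> B is surjective on objects. The image of a lens
   is closed under morphisms leaving it, since those lift along [put]. Let χ
   be its characteristic function and build the category of pairs (b, i),
   i a boolean flag, in which a morphism of B entering the image raises the
   flag. Both χ and the constant flag [true] are functorial sections of it,
   and the forgetful puts make them lenses from B; these agree after E
   because χ is [true] on the image, so χ is constantly [true].

   A functor F that is surjective on objects and lifts every morphism out of
   F a to a morphism out of a is a coequaliser of its kernel pair: a functor
   K identifying the fibres of F descends along chosen preimages of objects
   and chosen lifts of morphisms, and the descent is functorial because two
   lifts of the same morphism have the same image under K. *)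

Section FlagCategory.
Variables (B : Category) (chi : Ob B -> bool).
Hypothesis chi_closed : forall f : Mor B, chi (dom f) = true -> chi (cod f) = true.

Definition flag_tgt (f : Mor B) (i : bool) : bool :=
  i || (chi (cod f) && negb (chi (dom f))).

Lemma flag_tgt_id (a : Ob B) (i : bool) : flag_tgt (idm a) i = i.
Proof. unfold flag_tgt. rewrite dom_id, cod_id. now destruct i, (chi a). Qed.

Lemma flag_tgt_comp (g f : Mor B) (i : bool) : dom g = cod f ->
  flag_tgt (comp g f) i = flag_tgt g (flag_tgt f i).
Proof.
  intro Hgf. unfold flag_tgt. rewrite (cod_comp _ _ _ Hgf), (dom_comp _ _ _ Hgf), Hgf.
  pose proof (chi_closed f) as Hf. pose proof (chi_closed g) as Hg. rewrite Hgf in Hg.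
  destruct i, (chi (dom f)), (chi (cod f)), (chi (cod g)); simpl; auto;
    first [discriminate (Hf eq_refl) | discriminate (Hg eq_refl)].
Qed.

Definition flag_cat : Category.
Proof.
  refine {| Ob := (Ob B * bool)%type; Mor := (Mor B * bool)%type;
            dom := fun m => (dom (fst m), snd m);
            cod := fun m => (cod (fst m), flag_tgt (fst m) (snd m));
            idm := fun o => (idm (fst o), snd o);
            comp := fun g f => (comp (fst g) (fst f), snd f) |}.
  - intros [a i]; simpl. now rewrite dom_id.
  - intros [a i]; simpl. now rewrite cod_id, flag_tgt_id.
  - intros [g j] [f i] H; simpl in *. injection H as Hgf _. now rewrite (dom_comp _ _ _ Hgf).
  - intros [g j] [f i] H; simpl in *. injection H as Hgf Hj.
    now rewrite (cod_comp _ _ _ Hgf), flag_tgt_comp, Hj.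
  - intros [f i]; simpl. now rewrite comp_id_l.
  - intros [f i]; simpl. now rewrite comp_id_r.
  - intros [h k] [g j] [f i] Hhg Hgf; simpl in *.
    injection Hhg as Hhg _. injection Hgf as Hgf _. now rewrite comp_assoc.
Defined.

Variable flag : Ob B -> bool.
Hypothesis flag_section : forall f : Mor B, flag_tgt f (flag (dom f)) = flag (cod f).

Definition flag_functor : Functor B flag_cat.
Proof.
  refine {| fob := fun b => (b, flag b) : Ob flag_cat;
            fmor := fun f => (f, flag (dom f)) : Mor flag_cat |}.
  - reflexivity.
  - intro f; simpl. now rewrite flag_section.
  - intro a; simpl. now rewrite dom_id.
  - intros g f H; simpl. now rewrite dom_comp.
Defined.

Definition flag_lens : Lens B flag_cat.
Proof.
  refine {| get := flag_functor; put := fun _ (c : Mor flag_cat) => fst c |}.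
  - intros a [f i] H; simpl in *. now injection H.
  - intros a [f i] H; simpl in *. injection H as <- ->. reflexivity.
  - reflexivity.
  - reflexivity.
Defined.

End FlagCategory.

Lemma lens_lifts_morphisms (A B : Category) (E : Lens A B) (a : Ob A) (g : Mor B) :
  dom g = fob (get E) a -> exists f, dom f = a /\ fmor (get E) f = g.
Proof. intro Hg. exists (put E a g). now rewrite put_dom, put_get. Qed.

Lemma lens_epi_surjective (A B : Category) (E : Lens A B) :
  lens_epi E -> forall b, exists a, fob (get E) a = b.
Proof.
  intros Hepi b.
  set (chi := fun b => if excluded_middle_informative (exists a, fob (get E) a = b)
                       then true else false).
  assert (chi_image : forall a, chi (fob (get E) a) = true).
  { intro a. unfold chi. destruct excluded_middle_informative as [|Hn]; [reflexivity|].
    exfalso; apply Hn; eauto. }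
  assert (chi_closed : forall f : Mor B, chi (dom f) = true -> chi (cod f) = true).
  { intro f. unfold chi at 1.
    destruct excluded_middle_informative as [[a Ha]|]; [intros _|discriminate].
    destruct (lens_lifts_morphisms A B E a f (eq_sym Ha)) as [f' [_ Hf']].
    rewrite <- Hf', f_cod. apply chi_image. }
  assert (true_section : forall f, flag_tgt B chi f true = true) by reflexivity.
  assert (chi_section : forall f, flag_tgt B chi f (chi (dom f)) = chi (cod f)).
  { intro f. unfold flag_tgt. pose proof (chi_closed f) as Hf.
    destruct (chi (dom f)), (chi (cod f)); simpl; auto. discriminate (Hf eq_refl). }
  destruct (Hepi _ (flag_lens B chi chi_closed (fun _ => true) true_section)
                   (flag_lens B chi chi_closed chi chi_section)) as [[Hob _] _].
  - split; [split|].
    + intro a. simpl. now rewrite chi_image.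
    + intro f. simpl. now rewrite f_dom, chi_image.
    + reflexivity.
  - injection (Hob b). unfold chi.
    destruct excluded_middle_informative; [trivial|discriminate].
Qed.

Section DescentAlongKernelPair.
Variables (A B : Category) (F : Functor A B).

Lemma kernel_pair_coequalized : functor_eq (fcomp (kp_proj1 _ _ F) F) (fcomp (kp_proj2 _ _ F) F).
Proof. split; intros [[x y] H]; exact H. Qed.

Variables (D : Category) (K : Functor A D).
Hypothesis K_coeq : functor_eq (fcomp (kp_proj1 _ _ F) K) (fcomp (kp_proj2 _ _ F) K).

Lemma coeq_kernel_pair_fob (a a' : Ob A) : fob F a = fob F a' -> fob K a = fob K a'.
Proof. intro H. exact (proj1 K_coeq (exist _ (a, a') H)). Qed.

Lemma coeq_kernel_pair_fmor (f f' : Mor A) : fmor F f = fmor F f' -> fmor K f = fmor K f'.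
Proof. intro H. exact (proj2 K_coeq (exist _ (f, f') H)). Qed.

Hypothesis F_surjective : forall b, exists a, fob F a = b.
Hypothesis F_lifts : forall a g, dom g = fob F a -> exists f, dom f = a /\ fmor F f = g.

Definition preimage (b : Ob B) : Ob A :=
  proj1_sig (constructive_indefinite_description _ (F_surjective b)).

Lemma preimage_spec (b : Ob B) : fob F (preimage b) = b.
Proof. exact (proj2_sig (constructive_indefinite_description _ (F_surjective b))). Qed.

Definition lift (g : Mor B) : Mor A :=
  proj1_sig (constructive_indefinite_description _
    (F_lifts (preimage (dom g)) g (eq_sym (preimage_spec (dom g))))).

Lemma lift_spec (g : Mor B) : dom (lift g) = preimage (dom g) /\ fmor F (lift g) = g.
Proof. unfold lift. destruct constructive_indefinite_description as [f Hf]. exact Hf. Qed.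

Lemma descend_comp (g f : Mor B) : dom g = cod f ->
  fmor K (lift (comp g f)) = comp (fmor K (lift g)) (fmor K (lift f)).
Proof.
  intro Hgf.
  assert (Hg : dom g = fob F (cod (lift f))) by now rewrite <- f_cod, (proj2 (lift_spec f)).
  destruct (F_lifts _ _ Hg) as [g' [Hg'd Hg'F]].
  rewrite (coeq_kernel_pair_fmor (lift (comp g f)) (comp g' (lift f))).
  - rewrite f_comp by exact Hg'd. f_equal.
    apply coeq_kernel_pair_fmor. now rewrite Hg'F, (proj2 (lift_spec g)).
  - now rewrite f_comp, Hg'F, !(proj2 (lift_spec _)).
Qed.

Definition descend : Functor B D.
Proof.
  refine (Build_Functor B D (fun b => fob K (preimage b)) (fun g => fmor K (lift g)) _ _ _ _).
  - intro g. now rewrite f_dom, (proj1 (lift_spec g)).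
  - intro g. rewrite f_cod. apply coeq_kernel_pair_fob.
    now rewrite <- f_cod, (proj2 (lift_spec g)), preimage_spec.
  - intro b. rewrite <- f_id. apply coeq_kernel_pair_fmor.
    now rewrite (proj2 (lift_spec _)), f_id, preimage_spec.
  - exact descend_comp.
Defined.

Lemma descend_factors : functor_eq (fcomp F descend) K.
Proof.
  split.
  - intro a. apply coeq_kernel_pair_fob. now rewrite preimage_spec.
  - intro f. apply coeq_kernel_pair_fmor. now rewrite (proj2 (lift_spec _)).
Qed.

Lemma descend_unique (K'' : Functor B D) : functor_eq (fcomp F K'') K -> functor_eq K'' descend.
Proof.
  intros [Hob Hmor]. split.
  - intro b. simpl. rewrite <- (preimage_spec b) at 1. apply Hob.
  - intro g. simpl. rewrite <- (proj2 (lift_spec g)) at 1. apply Hmor.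
Qed.

End DescentAlongKernelPair.

Lemma surjective_lifting_effective_epi (A B : Category) (F : Functor A B) :
  (forall b, exists a, fob F a = b) ->
  (forall a g, dom g = fob F a -> exists f, dom f = a /\ fmor F f = g) ->
  effective_epi F.
Proof.
  intros F_surjective F_lifts. split; [apply kernel_pair_coequalized|].
  intros D K K_coeq.
  exists (descend A B F D K K_coeq F_surjective F_lifts).
  split; [apply descend_factors | apply descend_unique].
Qed.

Theorem proposition6p2 :
  forall (A B : Category) (E : Lens A B), lens_epi E -> effective_epi (get E).
Proof.
  intros A B E Hepi. apply surjective_lifting_effective_epi.
  - exact (lens_epi_surjective A B E Hepi).
  - exact (lens_lifts_morphisms A B E).
Qed.
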